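(* For each $n\ge1$, the maximum number of target-free cliques in a simple directed graph on $n$ nodes equals the maximum number of maximal cliques in a simple undirected graph on $n$ nodes.
   Context: In a simple directed graph, a clique is a nonempty set of nodes pairwise bidirectionally connected; a target of a clique $\sigma$ is a node $k\notin\sigma$ with $i\to k$ for all $i\in\sigma$; a target-free clique has no target. In an undirected graph, a maximal clique is a clique not properly contained in another clique. *)

From mathcomp Require Import all_boot.
Set Implicit Arguments. Unset Strict Implicit. Unset Printing Implicit Defensive.

(* A graph on the vertex set 'I_n is given by its adjacency relation,
   stored as a finite function so that graphs form a finite type. *)
Definition graph (n : nat) := {ffun 'I_n * 'I_n -> bool}.

Definition adj n (g : graph n) (i j : 'I_n) : bool := g (i, j).

(* simple directed graph: no loops (arcs i->j and j->i may both exist) *)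
Definition simple_digraph n (g : graph n) : bool :=
  [forall i, ~~ adj g i i].

Definition simple_ugraph n (g : graph n) : bool :=
  [forall i, ~~ adj g i i] && [forall i, forall j, adj g i j == adj g j i].

Definition dclique n (g : graph n) (s : {set 'I_n}) : bool :=
  (s != set0) &&
  [forall i in s, forall j in s, (i != j) ==> (adj g i j && adj g j i)].

Definition target n (g : graph n) (s : {set 'I_n}) (k : 'I_n) : bool :=
  (k \notin s) && [forall i in s, adj g i k].

Definition target_free n (g : graph n) (s : {set 'I_n}) : bool :=
  dclique g s && [forall k, ~~ target g s k].

Definition uclique n (g : graph n) (s : {set 'I_n}) : bool :=
  [forall i in s, forall j in s, (i != j) ==> adj g i j].

Definition maximal_uclique n (g : graph n) (s : {set 'I_n}) : bool :=
  uclique g s && [forall t : {set 'I_n}, (s \proper t) ==> ~~ uclique g t].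

Definition num_target_free n (g : graph n) : nat :=
  #|[set s : {set 'I_n} | target_free g s]|.

Definition num_maximal_cliques n (g : graph n) : nat :=
  #|[set s : {set 'I_n} | maximal_uclique g s]|.

From mathcomp Require Import all_boot.
Set Implicit Arguments. Unset Strict Implicit. Unset Printing Implicit Defensive.

(* Keep only the arcs of a digraph that are present in both directions.  The
   cliques of this undirected graph are the directed cliques of the digraph,
   and a target-free clique is a maximal clique there: a strictly larger clique
   would contain a vertex outside it receiving arcs from all of it, i.e. a
   target.  Conversely, a simple undirected graph is also a simple digraph,
   equal to its own mutual graph, in which a maximal clique has no target (the
   target could be added to it) and is nonempty as soon as there is a vertex.
   Hence each maximum is at most the other. *)

Definition mutual_graph n (g : graph n) : graph n :=
  [ffun p => g p && g (p.2, p.1)].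

Section Cliques.
Variables (n : nat) (g : graph n).
Implicit Types (s t : {set 'I_n}) (i j k : 'I_n).

Lemma ucliqueP s :
  reflect {in s &, forall i j, i != j -> adj g i j} (uclique g s).
Proof.
apply: (iffP forall_inP) => [cls i j iS jS | cls i iS].
  by move/forall_inP: (cls i iS) => /(_ j jS) /implyP.
by apply/forall_inP => j jS; apply/implyP; apply: cls.
Qed.

Lemma uclique_set1 i : uclique g [set i].
Proof. by apply/ucliqueP => j k /set1P -> /set1P ->; rewrite eqxx. Qed.

Lemma uclique_setU1 s k :
  uclique g s -> {in s, forall i, adj g i k && adj g k i} ->
  uclique g (k |: s).
Proof.
move=> /ucliqueP cls sk; apply/ucliqueP => i j /setU1P[-> | iS] /setU1P[-> | jS].
- by rewrite eqxx.
- by case/andP: (sk j jS).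
- by case/andP: (sk i iS).
- exact: cls.
Qed.

Lemma uclique_target s t k :
  uclique g t -> s \subset t -> k \in t -> k \notin s -> target g s k.
Proof.
move=> /ucliqueP clt /subsetP st kt ks; rewrite /target ks.
apply/forall_inP => i iS; apply: clt (st i iS) kt _.
by apply: contraNneq ks => <-.
Qed.

Lemma maximal_uclique_neq0 s : 0 < n -> maximal_uclique g s -> s != set0.
Proof.
move=> n_gt0 /andP[_ /forallP maxs].
apply: contraTneq (maxs [set Ordinal n_gt0]) => ->.
rewrite proper0 uclique_set1 implybF negbK.
by apply/set0Pn; exists (Ordinal n_gt0); rewrite set11.
Qed.

Lemma maximal_uclique_no_target s k :
  symmetric (adj g) -> maximal_uclique g s -> ~~ target g s k.
Proof.
move=> gsym /andP[cls /forallP maxs]; apply/negP => /andP[ks /forall_inP sk].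
have /implyP := maxs (k |: s); rewrite properUr ?sub1set // => /(_ isT) /negP.
by apply; apply: uclique_setU1 => // i iS; rewrite (gsym k) andbb sk.
Qed.

End Cliques.

Section MutualGraph.
Variables (n : nat) (g : graph n).
Implicit Types (s t : {set 'I_n}) (i j k : 'I_n).

Lemma adj_mutual i j : adj (mutual_graph g) i j = adj g i j && adj g j i.
Proof. by rewrite /adj ffunE. Qed.

Lemma mutual_graph_id : symmetric (adj g) -> mutual_graph g = g.
Proof.
move=> gsym; apply/ffunP => -[i j].
by have := adj_mutual i j; rewrite (gsym j) andbb.
Qed.

Lemma simple_ugraph_mutual : simple_digraph g -> simple_ugraph (mutual_graph g).
Proof.
move=> /forallP loopless; apply/andP; split; apply/forallP => i.
  by rewrite adj_mutual andbb loopless.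
by apply/forallP => j; rewrite !adj_mutual andbC.
Qed.

Lemma simple_ugraph_sym : simple_ugraph g -> symmetric (adj g).
Proof. by case/andP => _ /forallP gsym i j; apply/eqP/(forallP (gsym i)). Qed.

Lemma dcliqueE s : dclique g s = (s != set0) && uclique (mutual_graph g) s.
Proof.
congr (_ && _); apply: eq_forallb_in => i _; apply: eq_forallb_in => j _.
by rewrite adj_mutual.
Qed.

Lemma target_mutual s k : target (mutual_graph g) s k -> target g s k.
Proof.
case/andP => ks /forall_inP sk; rewrite /target ks.
by apply/forall_inP => i /sk; rewrite adj_mutual => /andP[].
Qed.

Lemma target_free_maximal s :
  target_free g s -> maximal_uclique (mutual_graph g) s.
Proof.
case/andP; rewrite dcliqueE => /andP[_ cls] /forallP notgt.
rewrite /maximal_uclique cls; apply/forallP => t; apply/implyP.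
case/properP => st [k kt ks]; apply: (contraNN _ (notgt k)) => clt.
exact: target_mutual (uclique_target clt st kt ks).
Qed.

Lemma maximal_target_free s :
  0 < n -> symmetric (adj g) -> maximal_uclique g s -> target_free g s.
Proof.
move=> n_gt0 gsym maxs.
rewrite /target_free dcliqueE mutual_graph_id // (maximal_uclique_neq0 n_gt0 maxs).
rewrite (andP maxs).1; apply/forallP => k.
exact: maximal_uclique_no_target.
Qed.

End MutualGraph.

Theorem lemma8 (n : nat) (hn : 1 <= n) :
  \max_(g : graph n | simple_digraph g) num_target_free g =
  \max_(g : graph n | simple_ugraph g) num_maximal_cliques g.
Proof.
apply/eqP; rewrite eqn_leq; apply/andP; split; apply/bigmax_leqP => g gs.
  apply: leq_trans (leq_bigmax_cond _ (simple_ugraph_mutual gs)).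
  apply/subset_leq_card/subsetP => s; rewrite !inE.
  exact: target_free_maximal.
have gd : simple_digraph g by case/andP: gs.
apply: leq_trans (leq_bigmax_cond _ gd).
apply/subset_leq_card/subsetP => s; rewrite !inE.
exact: maximal_target_free (simple_ugraph_sym gs).
Qed.
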